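(* Let $G=(V,E)$ be a finite simple graph and $v\in V$. Let $G-v$ be the graph obtained from $G$ by deleting $v$ and all edges incident to $v$, and let $G/v$ be the graph obtained from $G$ by deleting $v$ and making the open neighbourhood $N_G(v)$ a clique (already adjacent pairs remain simply adjacent). Then $$\frac{\gamma_{coe}(G-v)+\gamma_{coe}(G/v)}{2}-\deg(v)+1\leq \gamma_{coe}(G)\leq \frac{\gamma_{coe}(G-v)+\gamma_{coe}(G/v)}{2}+\deg(v)+1.$$
   Context: All graphs are finite and simple. For a graph $G=(V,E)$ and $v\in V$, $N_G(v)=\{u\in V: uv\in E\}$ and $\deg(v)=|N_G(v)|$. A set $D\subseteq V$ is a dominating set if every vertex of $V\setminus D$ is adjacent to at least one vertex of $D$. A dominating set $D$ is a co-even dominating set if $\deg(v)$ is even for every $v\in V\setminus D$ (degrees taken in the graph under consideration). The co-even domination number $\gamma_{coe}(G)$ is the minimum cardinality of a co-even dominating set of $G$. *)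

(* A finite simple graph is given by a vertex set V : {set T}
   inside a finType T together with a symmetric irreflexive adjacency relation
   e : rel T (only edges between vertices of V matter). *)
From mathcomp Require Import all_boot all_order all_algebra.
Set Implicit Arguments. Unset Strict Implicit. Unset Printing Implicit Defensive.

Section Graphs.
Variable T : finType.

Definition simple_graph (e : rel T) : Prop := symmetric e /\ irreflexive e.

Definition nbhd (V : {set T}) (e : rel T) (x : T) : {set T} := [set y in V | e x y].
Definition deg (V : {set T}) (e : rel T) (x : T) : nat := #|nbhd V e x|.

Definition dominating (V : {set T}) (e : rel T) (D : {set T}) : bool :=
  (D \subset V) && [forall x in V :\: D, [exists y in D, e x y]].

Definition coeven_dominating (V : {set T}) (e : rel T) (D : {set T}) : bool :=
  dominating V e D && [forall x in V :\: D, ~~ odd (deg V e x)].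

Definition has_coe_of_size (V : {set T}) (e : rel T) (n : nat) : bool :=
  [exists D : {set T}, coeven_dominating V e D && (#|D| == n)].

Lemma has_coe_V (V : {set T}) (e : rel T) : exists n, has_coe_of_size V e n.
Proof.
exists #|V|; apply/existsP; exists V.
rewrite /coeven_dominating /dominating subxx eqxx /= andbT.
by apply/andP; split; apply/forallP => x; rewrite setDv inE.
Qed.

Definition gamma_coe (V : {set T}) (e : rel T) : nat := ex_minn (has_coe_V V e).

Definition del_vertex (V : {set T}) (v : T) : {set T} := V :\ v.

Definition contract_rel (V : {set T}) (e : rel T) (v : T) : rel T :=
  fun x y => e x y || [&& x != y, x \in nbhd V e v & y \in nbhd V e v].

End Graphs.

(** Every vertex outside the closed neighbourhood N[v] has the same
   neighbourhood in G, G - v and G / v, so co-even domination can be moved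
   between these graphs by only adjusting N[v]. Adding v and N(v) to a
   co-even dominating set of G - v or G / v gives one of G, and replacing v by
   N(v) in a co-even dominating set D of G gives one of G - v and G / v; the
   latter costs at most deg v - 1 new vertices, because either v is in D or v
   has a dominator in D that already lies in N(v). Averaging the resulting
   bounds over G - v and G / v gives the theorem. *)
From mathcomp Require Import all_boot all_order all_algebra.
From mathcomp Require Import lra zify.
Import GRing.Theory Num.Theory.

Set Implicit Arguments.
Unset Strict Implicit.
Unset Printing Implicit Defensive.

Section CoevenDomination.
Variable T : finType.
Implicit Types (V D : {set T}) (e : rel T).

Lemma nbhd_subset V e x : nbhd V e x \subset V.
Proof. by rewrite /nbhd setIdE subsetIl. Qed.

Lemma gamma_coe_min V e D : coeven_dominating V e D -> gamma_coe V e <= #|D|.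
Proof.
move=> coeD; rewrite /gamma_coe; case: ex_minnP => m _; apply.
by apply/existsP; exists D; rewrite coeD eqxx.
Qed.

Lemma gamma_coe_attained V e :
  exists2 D, coeven_dominating V e D & #|D| = gamma_coe V e.
Proof.
by rewrite /gamma_coe; case: ex_minnP => m /existsP [D /andP [coeD /eqP]]; exists D.
Qed.

Lemma coeven_dominating_transfer V1 e1 D1 V2 e2 D2 :
  coeven_dominating V1 e1 D1 ->
  D2 \subset V2 -> D1 :&: V2 \subset D2 -> V2 :\: D2 \subset V1 ->
  {in V2 :\: D2, forall x, nbhd V2 e2 x = nbhd V1 e1 x} ->
  coeven_dominating V2 e2 D2.
Proof.
case/andP => /andP [sD1 domD1] evenD1 sD2 sD12 sV21 nbhd21.
have outD1 x : x \in V2 :\: D2 -> x \in V1 :\: D1.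
  move=> xVD; case/setDP: (xVD) => xV2 xD2.
  rewrite inE (subsetP sV21) // andbT.
  by apply: contra xD2 => xD1; rewrite (subsetP sD12) // inE xD1.
rewrite /coeven_dominating /dominating sD2 /=.
apply/andP; split; apply/forallP => x; apply/implyP => xVD.
- have /implyP/(_ (outD1 x xVD))/existsP [y /andP [yD1 exy]] := forallP domD1 x.
  have : y \in nbhd V2 e2 x by rewrite nbhd21 // inE (subsetP sD1).
  rewrite inE => /andP [yV2 e2xy]; apply/existsP; exists y.
  by rewrite e2xy (subsetP sD12) // inE yD1.
- by rewrite /deg nbhd21 //; apply: (implyP (forallP evenD1 x)); apply: outD1.
Qed.

Variables (V : {set T}) (e e' : rel T) (v : T).
Hypotheses (e_sym : symmetric e) (e_irr : irreflexive e) (vV : v \in V).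
Hypothesis e'_off_nbhd : forall x, x \notin nbhd V e v -> e' x =1 e x.

Lemma nbhd_off_nbhd x :
  x \in V :\ v -> x \notin nbhd V e v -> nbhd (V :\ v) e' x = nbhd V e x.
Proof.
case/setD1P => xv xV xN; apply/setP => y; rewrite !inE e'_off_nbhd //.
case: eqVneq => [->|] //=.
by move: xN; rewrite inE xV e_sym vV => /negbTE ->.
Qed.

Lemma coeven_dominating_add_nbhd D1 : coeven_dominating (V :\ v) e' D1 ->
  coeven_dominating V e (v |: (D1 :|: nbhd V e v)).
Proof.
move=> coeD1; have /andP [/andP [sD1 _] _] := coeD1.
apply: (coeven_dominating_transfer coeD1).
- by rewrite !subUset sub1set vV (subset_trans sD1 (subD1set _ _)) nbhd_subset.
- by apply/subsetP => y /setIP [yD1 _]; rewrite !inE yD1 orbT.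
- by apply/subsetP => x; rewrite !inE => /andP [/norP [-> _] ->].
- move=> x; rewrite in_setD in_setU1 in_setU => /andP [/norP [xv /norP [_ xN]] xV].
  by apply/esym/nbhd_off_nbhd; rewrite // in_setD1 xv.
Qed.

Lemma coeven_dominating_swap_nbhd D : coeven_dominating V e D ->
  coeven_dominating (V :\ v) e' ((D :\ v) :|: nbhd V e v).
Proof.
move=> coeD; have /andP [/andP [sD _] _] := coeD.
apply: (coeven_dominating_transfer coeD).
- rewrite subUset setSD //=; apply/subsetP => y yN.
  rewrite in_setD1 (subsetP (nbhd_subset _ _ _) _ yN) andbT.
  by apply: contraTneq yN => ->; rewrite inE e_irr andbF.
- by apply/subsetP => y; rewrite !inE => /andP [yD /andP [-> _]]; rewrite yD.
- exact: subset_trans (subsetDl _ _) (subD1set _ _).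
- move=> x; rewrite in_setD in_setU => /andP [/norP [_ xN] xVv].
  exact: nbhd_off_nbhd.
Qed.

Lemma card_add_nbhd D1 : #|v |: (D1 :|: nbhd V e v)| <= #|D1| + deg V e v + 1.
Proof.
by rewrite /deg cardsU1 addnC leq_add ?leq_b1 ?(leq_card_setU _ _).1.
Qed.

Lemma card_swap_nbhd D : dominating V e D ->
  #|(D :\ v) :|: nbhd V e v| + 1 <= #|D| + deg V e v.
Proof.
case/andP => sD domD; rewrite /deg.
have := cardsUI (D :\ v) (nbhd V e v); have := cardsD1 v D.
case vD: (v \in D); first lia.
suff : 0 < #|(D :\ v) :&: nbhd V e v| by lia.
have vVD : v \in V :\: D by rewrite inE vD vV.
have /implyP/(_ vVD)/existsP [y /andP [yD evy]] := forallP domD v.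
apply/card_gt0P; exists y; rewrite !inE yD evy (subsetP sD) //= !andbT.
by apply: contraTneq evy => ->; rewrite e_irr.
Qed.

Lemma gamma_coe_off_nbhd_bounds :
  gamma_coe V e <= gamma_coe (V :\ v) e' + deg V e v + 1 /\
  gamma_coe (V :\ v) e' + 1 <= gamma_coe V e + deg V e v.
Proof.
split.
  have [D1 coeD1 <-] := gamma_coe_attained (V :\ v) e'.
  exact/(leq_trans _ (card_add_nbhd D1))/gamma_coe_min/coeven_dominating_add_nbhd.
have [D coeD <-] := gamma_coe_attained V e.
have domD : dominating V e D by case/andP: coeD.
apply: leq_trans (card_swap_nbhd domD); rewrite leq_add2r.
exact/gamma_coe_min/coeven_dominating_swap_nbhd.
Qed.

End CoevenDomination.

Lemma contract_rel_off_nbhd (T : finType) (V : {set T}) (e : rel T) (v x : T) :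
  x \notin nbhd V e v -> contract_rel V e v x =1 e x.
Proof. by move=> xN y; rewrite /contract_rel (negbTE xN) andbF orbF. Qed.

Local Open Scope ring_scope.

Theorem mainTheorem5 (T : finType) (V : {set T}) (e : rel T) (v : T) :
  simple_graph e -> v \in V ->
  let g  := (gamma_coe V e)%:R : rat in
  let g1 := (gamma_coe (del_vertex V v) e)%:R : rat in
  let g2 := (gamma_coe (del_vertex V v) (contract_rel V e v))%:R : rat in
  let d  := (deg V e v)%:R : rat in
  (g1 + g2) / 2 - d + 1 <= g /\ g <= (g1 + g2) / 2 + d + 1.
Proof.
move=> [e_sym e_irr] vV g g1 g2 d.
have [up1 lo1] := gamma_coe_off_nbhd_bounds e_sym e_irr vV (fun x _ => frefl (e x)).
have [up2 lo2] := gamma_coe_off_nbhd_bounds e_sym e_irr vV (@contract_rel_off_nbhd _ V e v).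
move: up1 lo1 up2 lo2; rewrite -!(ler_nat rat) !natrD -/g -/d.
by rewrite /g1 /g2 /del_vertex => *; split; lra.
Qed.
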